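(* Assume $0<\underline{d}_w<\overline{d}_w\le L\cos(\underline{\theta}_w)<L/\cos(\underline{\theta}_w)$, where $\underline{\theta}_w\in(0,\pi/2)$, and consider $$\max_{P,d_w,\theta_w}\ \gamma_b(P,d_w,\theta_w)\quad\text{s.t.}\quad \mathcal{D}_{01}(P,d_w,\theta_w)\le2\epsilon^2,\ \ 0<P\le P_m,\ \ \underline{d}_w\le d_w\le\overline{d}_w,\ \ \underline{\theta}_w\le\theta_w\le\frac{\pi}{2}.$$ Let $\theta_w^\circ(\overline{d}_w)$ be the (unique) maximizer of $\theta_w\mapsto\gamma_b(P,\overline{d}_w,\theta_w)$ over $\theta_w\in[0,\pi/2]$ without constraints (it does not depend on $P>0$). Let $P^{\epsilon}$ be the unique value of $P$ with $\mathcal{D}_{01}(P,\overline{d}_w,\underline{\theta}_w)=2\epsilon^2$, let $\theta_w^{\epsilon}$ be the unique solution in $\theta_w$ of $\mathcal{D}_{01}(P_m,\overline{d}_w,\theta_w)=2\epsilon^2$, and let $(P^j,\theta_w^j)$ be the unique maximizer of $$\max_{P,\theta_w}\ \gamma_b(P,\overline{d}_w,\theta_w)\quad\text{s.t.}\quad \mathcal{D}_{01}(P,\overline{d}_w,\theta_w)=2\epsilon^2,\ \ P\le P_m,\ \ \max\{\underline{\theta}_w,\theta_w^{\epsilon}\}\le\theta_w\le\theta_w^\circ(\overline{d}_w).$$ Then the optimal solution $(d_w^\ast,\theta_w^\ast,P^\ast)$ of the original problem is: (A) $(\overline{d}_w,\underline{\theta}_w,P_m)$ if $\theta_w^\circ(\overline{d}_w)<\underline{\theta}_w$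 and $\mathcal{D}_{01}(P_m,\overline{d}_w,\underline{\theta}_w)\le2\epsilon^2$; (B) $(\overline{d}_w,\underline{\theta}_w,P^{\epsilon})$ if $\theta_w^\circ(\overline{d}_w)<\underline{\theta}_w$ and $\mathcal{D}_{01}(P_m,\overline{d}_w,\underline{\theta}_w)>2\epsilon^2$; (C) $(\overline{d}_w,\theta_w^\circ(\overline{d}_w),P_m)$ if $\underline{\theta}_w\le\theta_w^\circ(\overline{d}_w)\le\arccos(\overline{d}_w/L)$ and $\mathcal{D}_{01}(P_m,\overline{d}_w,\theta_w^\circ(\overline{d}_w))\le2\epsilon^2$; (D) $(\overline{d}_w,\theta_w^j,P^j)$ if $\underline{\theta}_w\le\theta_w^\circ(\overline{d}_w)\le\arccos(\overline{d}_w/L)$ and $\mathcal{D}_{01}(P_m,\overline{d}_w,\theta_w^\circ(\overline{d}_w))>2\epsilon^2$.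
   Context: Setting: Willie and Bob are ground points at distance $L>0$; a UAV lies in the vertical plane through them, on Bob's side, at distance $d_w>0$ from Willie and at elevation angle $\theta_w\in[0,\pi/2]$ (radians) seen from Willie, and transmits with power $P$. Constants: $\xi_{\mathrm{L}}<0$, $\xi_{\mathrm{N}}<0$; $a,b>0$; $\sigma_b^2,\sigma_w^2>0$; $n\in\mathbb{N}$; $\epsilon>0$; $P_m>0$. Define $d_b=\sqrt{L^2+d_w^2-2d_wL\cos(\theta_w)}$, $$p_b=\frac{1}{1+a\exp\!\left(-b\left[\frac{180}{\pi}\arcsin\!\left(\frac{d_w\sin\theta_w}{d_b}\right)-a\right]\right)},\qquad p_w=\frac{1}{1+a\exp\!\left(-b\left[\frac{180}{\pi}\theta_w-a\right]\right)},$$ $f(d_w,\theta_w)=d_b^{\xi_{\mathrm{L}}}p_b$, and $\gamma_b(P,d_w,\theta_w)=Pf(d_w,\theta_w)/\sigma_b^2$. With $\bar P=P d_w^{\xi_{\mathrm{L}}}p_w+P d_w^{\xi_{\mathrm{N}}}$, define $$\mathcal{D}_{01}(P,d_w,\theta_w)=\frac{n}{2}\left[\ln\!\left(\frac{\bar P+\sigma_w^2}{\sigma_w^2}\right)-\frac{\bar P}{\bar P+\sigma_w^2}\right].$$ *)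

From Stdlib Require Import Reals Lra.
Open Scope R_scope.

Definition rpow (d xi : R) : R := Rpower d xi.

Definition d_b (L dw thw : R) : R :=
  sqrt (L ^ 2 + dw ^ 2 - 2 * dw * L * cos thw).

(* LoS probabilities (angles converted to degrees). *)
Definition p_b (a b L dw thw : R) : R :=
  1 / (1 + a * exp (- b * (180 / PI * asin (dw * sin thw / d_b L dw thw) - a))).

Definition p_w (a b thw : R) : R :=
  1 / (1 + a * exp (- b * (180 / PI * thw - a))).

Definition f_gain (xiL a b L dw thw : R) : R :=
  rpow (d_b L dw thw) xiL * p_b a b L dw thw.

Definition gamma_b (xiL a b sb2 L P dw thw : R) : R :=
  P * f_gain xiL a b L dw thw / sb2.

Definition Pbar (xiL xiN a b P dw thw : R) : R :=
  P * rpow dw xiL * p_w a b thw + P * rpow dw xiN.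

Definition D01 (xiL xiN a b sw2 : R) (n : nat) (P dw thw : R) : R :=
  INR n / 2 *
  (ln ((Pbar xiL xiN a b P dw thw + sw2) / sw2)
   - Pbar xiL xiN a b P dw thw / (Pbar xiL xiN a b P dw thw + sw2)).

Definition feasible (xiL xiN a b sw2 : R) (n : nat) (eps Pm dl du thl : R)
  (P dw thw : R) : Prop :=
  D01 xiL xiN a b sw2 n P dw thw <= 2 * eps ^ 2 /\
  0 < P <= Pm /\ dl <= dw <= du /\ thl <= thw <= PI / 2.

Definition optimal (xiL xiN a b sb2 sw2 L : R) (n : nat) (eps Pm dl du thl : R)
  (P dw thw : R) : Prop :=
  feasible xiL xiN a b sw2 n eps Pm dl du thl P dw thw /\
  forall P' dw' thw',
    feasible xiL xiN a b sw2 n eps Pm dl du thl P' dw' thw' ->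
    gamma_b xiL a b sb2 L P' dw' thw' <= gamma_b xiL a b sb2 L P dw thw.

From Stdlib Require Import Reals Lra Lia.
From Coquelicot Require Import Coquelicot.
Open Scope R_scope.

(* Bob's gain f depends on the UAV position only through the distance d_b,
   which it penalises, and the sine of Bob's elevation angle, which it
   rewards. On the circle d_w = du Bob's elevation is largest at
   arccos (du / L), and a position with d_w <= du at angle t is dominated by
   the circle point at angle min t (arccos (du / L)). Along that circle the
   derivative of ln f changes sign at most once, from + to -, so f is unimodal
   with peak thO. On Willie's side D01 increases with his received power
   P h(d_w, t), where h decreases in d_w and increases in t, so covertness
   caps P h. In each case a feasible point is moved onto the circle, its angle
   pushed towards thO within the admissible range, and its power raised to
   the cap. *)

Lemma exp_le x y : x <= y -> exp x <= exp y.
Proof. intros [H | ->]; [now apply Rlt_le, exp_increasing | apply Rle_refl]. Qed.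

Lemma atan_le x y : x <= y -> atan x <= atan y.
Proof. intros [H | ->]; [now apply Rlt_le, atan_increasing | apply Rle_refl]. Qed.

Lemma asin_le x y : -1 <= x -> x <= y -> y <= 1 -> asin x <= asin y.
Proof.
intros Hx Hxy Hy. destruct (asin_bound x), (asin_bound y).
apply sin_incr_0; try lra. rewrite !sin_asin; lra.
Qed.

Lemma ln_sqrt x : 0 < x -> ln (sqrt x) = ln x / 2.
Proof.
intros Hx. pose proof (sqrt_lt_R0 x Hx).
rewrite <- (sqrt_sqrt x) at 2 by lra. rewrite ln_mult by assumption. lra.
Qed.

Lemma le_acos_iff t c : 0 <= t <= PI -> -1 <= c <= 1 -> (t <= acos c <-> c <= cos t).
Proof.
intros Ht Hc. destruct (acos_bound c). split; intro Hle.
- rewrite <- (cos_acos c) at 1 by lra. apply cos_decr_1; lra.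
- apply cos_decr_0; try lra. rewrite cos_acos; lra.
Qed.

Lemma rpow_pos d xi : 0 < rpow d xi.
Proof. apply exp_pos. Qed.

Lemma rpow_le_neg d1 d2 xi : xi < 0 -> 0 < d1 <= d2 -> rpow d2 xi <= rpow d1 xi.
Proof.
intros Hxi [Hd1 Hd12]. apply exp_le, Rmult_le_compat_neg_l; [lra | now apply ln_le].
Qed.

Lemma is_derive_nondecreasing (f df : R -> R) u v :
  u <= v -> (forall x, u <= x <= v -> is_derive f x (df x)) ->
  (forall x, u <= x <= v -> 0 <= df x) -> f u <= f v.
Proof.
intros Huv Hd Hpos.
destruct (MVT_gen f u v df) as [c [Hc Hmvt]];
  rewrite ?Rmin_left, ?Rmax_right in * by lra.
- intros x Hx. apply Hd. lra.
- intros x Hx. apply derivable_continuous_pt.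
  exists (df x). apply is_derive_Reals, Hd. lra.
- assert (0 <= df c * (v - u)) by (apply Rmult_le_pos; [apply Hpos |]; lra). lra.
Qed.

Definition quasiconcave_on (f : R -> R) (u v : R) : Prop :=
  forall t1 t2 t3, u <= t1 <= t2 -> t2 <= t3 <= v -> f t1 <= f t2 \/ f t3 <= f t2.

Lemma is_derive_quasiconcave (f df : R -> R) u v :
  (forall x, u <= x <= v -> is_derive f x (df x)) ->
  (forall x y, u <= x <= y -> y <= v -> 0 <= df y -> 0 <= df x) ->
  quasiconcave_on f u v.
Proof.
intros Hd Hcross t1 t2 t3 H12 H23.
destruct (Rle_lt_dec 0 (df t2)) as [Hpos | Hneg].
- left. apply (is_derive_nondecreasing f df); [lra | intros; apply Hd; lra |].
  intros x Hx. apply (Hcross x t2); lra.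
- right. enough (- f t2 <= - f t3) by lra.
  apply (is_derive_nondecreasing (fun x => - f x) (fun x => - df x)); [lra | |].
  + intros x Hx. apply (is_derive_opp f x (df x)), Hd. lra.
  + intros x Hx. destruct (Rle_lt_dec 0 (df x)) as [Hdx | Hdx]; [| lra].
    assert (0 <= df t2) by (apply (Hcross t2 x); lra). lra.
Qed.

Section QuasiconcavePeak.

Variables (f : R -> R) (u v m : R).
Hypotheses (Hf : quasiconcave_on f u v) (Hm : u <= m <= v)
  (Hpeak : forall t, u <= t <= v -> f t <= f m).

Lemma quasiconcave_peak_left t1 t2 : u <= t1 -> t1 <= t2 <= m -> f t1 <= f t2.
Proof.
intros. assert (f t1 <= f m) by (apply Hpeak; lra).
destruct (Hf t1 t2 m); lra.
Qed.

Lemma quasiconcave_peak_right t2 t3 : m <= t2 <= t3 -> t3 <= v -> f t3 <= f t2.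
Proof.
intros. assert (f t3 <= f m) by (apply Hpeak; lra).
destruct (Hf m t2 t3); lra.
Qed.

Lemma quasiconcave_peak_clamp lo t : u <= lo <= m -> u <= t <= v ->
  f t <= f (Rmax lo (Rmin t m)).
Proof.
intros Hlo Ht. destruct (Rle_dec t m) as [Htm | Htm].
- rewrite Rmin_left by lra. destruct (Rle_dec lo t).
  + rewrite Rmax_right by lra. apply Rle_refl.
  + rewrite Rmax_left by lra. apply quasiconcave_peak_left; lra.
- rewrite Rmin_right, Rmax_right by lra. apply Hpeak. lra.
Qed.

End QuasiconcavePeak.

(** * Bob's gain: distance and elevation *)

Definition sin_elev_b (L dw t : R) : R := dw * sin t / d_b L dw t.

Lemma f_gain_elev xiL a b L dw t :
  f_gain xiL a b L dw t = rpow (d_b L dw t) xiL * p_w a b (asin (sin_elev_b L dw t)).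
Proof. reflexivity. Qed.

Lemma d_b_sqr_polar L dw t :
  L ^ 2 + dw ^ 2 - 2 * dw * L * cos t = (L - dw * cos t) ^ 2 + (dw * sin t) ^ 2.
Proof. pose proof (sin2_cos2 t) as Hsc. unfold Rsqr in Hsc. nra. Qed.

Lemma d_b_radicand_pos L dw t : 0 <= dw < L -> 0 < L ^ 2 + dw ^ 2 - 2 * dw * L * cos t.
Proof.
intros Hdw. rewrite d_b_sqr_polar.
pose proof (COS_bound t). assert (0 < L - dw * cos t) by nra. nra.
Qed.

Lemma d_b_pos L dw t : 0 <= dw < L -> 0 < d_b L dw t.
Proof. intros Hdw. now apply sqrt_lt_R0, d_b_radicand_pos. Qed.

Lemma sin_elev_b_bounds L dw t : 0 <= dw < L -> 0 <= t <= PI ->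
  0 <= sin_elev_b L dw t <= 1.
Proof.
intros Hdw Ht. pose proof (d_b_pos L dw t Hdw) as Hd.
assert (Hy : 0 <= dw * sin t) by (apply Rmult_le_pos; [lra | apply sin_ge_0; lra]).
split; [apply Rdiv_le_0_compat; lra |].
apply (Rdiv_le_1 _ _ Hd). rewrite <- (sqrt_pow2 _ Hy).
apply sqrt_le_1_alt. rewrite d_b_sqr_polar. pose proof (pow2_ge_0 (L - dw * cos t)). lra.
Qed.

Lemma p_w_pos a b t : 0 < a -> 0 < p_w a b t.
Proof.
intros Ha. unfold p_w. pose proof (exp_pos (- b * (180 / PI * t - a))).
apply Rdiv_lt_0_compat; nra.
Qed.

Lemma p_w_le a b t1 t2 : 0 < a -> 0 < b -> t1 <= t2 -> p_w a b t1 <= p_w a b t2.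
Proof.
intros Ha Hb Ht. unfold p_w, Rdiv. rewrite !Rmult_1_l.
pose proof (exp_pos (- b * (180 / PI * t2 - a))).
apply Rinv_le_contravar; [nra |]. apply Rplus_le_compat_l, Rmult_le_compat_l; [lra |].
assert (0 < 180 / PI) by (apply Rdiv_lt_0_compat; [lra | apply PI_RGT_0]).
apply exp_le, Rmult_le_compat_neg_l; [lra |].
apply Rplus_le_compat_r, Rmult_le_compat_l; lra.
Qed.

Lemma f_gain_pos xiL a b L dw t : 0 < a -> 0 < f_gain xiL a b L dw t.
Proof.
intros Ha. rewrite f_gain_elev.
apply Rmult_lt_0_compat; [apply rpow_pos | now apply p_w_pos].
Qed.

Lemma f_gain_le xiL a b L dw1 t1 dw2 t2 : xiL < 0 -> 0 < a -> 0 < b ->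
  0 < d_b L dw2 t2 <= d_b L dw1 t1 ->
  -1 <= sin_elev_b L dw1 t1 <= sin_elev_b L dw2 t2 -> sin_elev_b L dw2 t2 <= 1 ->
  f_gain xiL a b L dw1 t1 <= f_gain xiL a b L dw2 t2.
Proof.
intros HxiL Ha Hb Hd Hs Hs2. rewrite !f_gain_elev.
apply Rmult_le_compat.
- apply Rlt_le, rpow_pos.
- now apply Rlt_le, p_w_pos.
- now apply rpow_le_neg.
- apply p_w_le, asin_le; lra.
Qed.

Section CircleDomination.

Variables (xiL a b L du : R).
Hypotheses (HxiL : xiL < 0) (Ha : 0 < a) (Hb : 0 < b) (Hdu : 0 < du < L).

Lemma f_gain_le_radial dw t : 0 < dw <= du -> 0 <= t <= PI / 2 -> du <= L * cos t ->
  f_gain xiL a b L dw t <= f_gain xiL a b L du t.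
Proof.
intros Hdw Ht Hc. pose proof PI_RGT_0.
assert (Hdist : d_b L du t <= d_b L dw t) by (apply sqrt_le_1_alt; nra).
pose proof (d_b_pos L du t ltac:(lra)). pose proof (d_b_pos L dw t ltac:(lra)).
assert (Hs : 0 <= sin t) by (apply sin_ge_0; lra).
pose proof (sin_elev_b_bounds L dw t ltac:(lra) ltac:(lra)).
pose proof (sin_elev_b_bounds L du t ltac:(lra) ltac:(lra)).
apply f_gain_le; try lra. split; [lra |].
unfold sin_elev_b, Rdiv. apply Rmult_le_compat; try nra.
- apply Rlt_le, Rinv_0_lt_compat; lra.
- apply Rinv_le_contravar; lra.
Qed.

Lemma f_gain_le_max_elevation dw t : 0 < dw <= du -> 0 <= t <= PI / 2 -> L * cos t <= du ->
  f_gain xiL a b L dw t <= f_gain xiL a b L du (acos (du / L)).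
Proof.
intros Hdw Ht Hc. pose proof PI_RGT_0.
assert (Hq : 0 < du / L < 1).
{ split; [apply Rdiv_lt_0_compat | apply (Rdiv_lt_1 du L)]; lra. }
destruct (acos_bound (du / L)) as [Hm0 HmPI].
assert (Hcos : cos (acos (du / L)) = du / L) by (apply cos_acos; lra).
assert (Hdbm : d_b L du (acos (du / L)) = sqrt (L ^ 2 - du ^ 2)).
{ unfold d_b. rewrite Hcos. f_equal. field. lra. }
assert (Hroot : 0 < sqrt (L ^ 2 - du ^ 2)) by (apply sqrt_lt_R0; nra).
assert (Helev : sin_elev_b L du (acos (du / L)) = du / L).
{ unfold sin_elev_b. rewrite Hdbm, sin_acos by lra.
  replace (L ^ 2 - du ^ 2) with (L ^ 2 * (1 - (du / L)²)) by (unfold Rsqr; field; lra).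
  rewrite sqrt_mult_alt, sqrt_pow2 by (try apply pow2_ge_0; lra).
  field. split; [lra |]. apply Rgt_not_eq, sqrt_lt_R0. unfold Rsqr. nra. }
pose proof (d_b_pos L dw t ltac:(lra)) as Hdb.
assert (Hs : 0 <= sin t) by (apply sin_ge_0; lra).
pose proof (sin_elev_b_bounds L dw t ltac:(lra) ltac:(lra)).
apply f_gain_le; rewrite ?Hdbm, ?Helev; try lra.
- split; [exact Hroot |]. apply sqrt_le_1_alt. nra.
- split; [lra |]. unfold sin_elev_b. apply (Rle_div_l _ _ _ Hdb).
  apply Rmult_le_reg_r with L; [lra |].
  replace (du / L * d_b L dw t * L) with (du * d_b L dw t) by (field; lra).
  apply Rsqr_incr_0_var; [| nra].
  unfold d_b. rewrite !Rsqr_mult, Rsqr_sqrt by (apply Rlt_le, d_b_radicand_pos; lra).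
  pose proof (sin2 t) as Hsin. unfold Rsqr in *.
  (* the gap is [(du^2 - L x)^2 + (L^2 - du^2) (du^2 - dw^2)] with [x = dw cos t] *)
  assert (0 <= (du ^ 2 - L * dw * cos t) ^ 2) by apply pow2_ge_0.
  assert (0 <= (L ^ 2 - du ^ 2) * (du ^ 2 - dw ^ 2)) by (apply Rmult_le_pos; nra).
  nra.
Qed.

Lemma f_gain_le_circle dw t : 0 < dw <= du -> 0 <= t <= PI / 2 ->
  f_gain xiL a b L dw t <= f_gain xiL a b L du (Rmin t (acos (du / L))).
Proof.
intros Hdw Ht. pose proof PI_RGT_0.
assert (Hq : -1 <= du / L <= 1).
{ assert (0 < du / L) by (apply Rdiv_lt_0_compat; lra).
  assert (du / L < 1) by (apply (Rdiv_lt_1 du L); lra). lra. }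
pose proof (le_acos_iff t (du / L) ltac:(lra) Hq) as Hiff.
destruct (Rle_dec t (acos (du / L))) as [Hle | Hgt].
- rewrite Rmin_left by exact Hle. apply f_gain_le_radial; try assumption.
  apply Hiff in Hle. apply Rle_div_l in Hle; lra.
- rewrite Rmin_right by lra. apply f_gain_le_max_elevation; try assumption.
  assert (Hlt : cos t < du / L) by (apply Rnot_le_lt; now rewrite <- Hiff).
  apply Rlt_div_r in Hlt; lra.
Qed.

End CircleDomination.

(** * Unimodality of Bob's gain on a circle around Willie *)

Definition elev_tan (L du t : R) : R := du * sin t / (L - du * cos t).

Definition nlos_odds (a b L du t : R) : R :=
  a * exp (- b * (180 / PI * atan (elev_tan L du t) - a)).

Definition log_gain (xiL a b L du t : R) : R :=
  xiL * ln (L ^ 2 + du ^ 2 - 2 * du * L * cos t) / 2 - ln (1 + nlos_odds a b L du t).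

Definition log_gain_slope (xiL a b L du t : R) : R :=
  xiL * L * sin t
  + b * (180 / PI) * (nlos_odds a b L du t / (1 + nlos_odds a b L du t)) * (L * cos t - du).

Section LogGain.

Variables (xiL a b L du : R).
Hypotheses (HxiL : xiL < 0) (Ha : 0 < a) (Hb : 0 < b) (Hdu : 0 < du < L).

Lemma elev_tan_den_pos t : 0 < L - du * cos t.
Proof. pose proof (COS_bound t). nra. Qed.

Lemma nlos_odds_pos t : 0 < nlos_odds a b L du t.
Proof. apply Rmult_lt_0_compat; [exact Ha | apply exp_pos]. Qed.

Lemma asin_sin_elev_b t : asin (sin_elev_b L du t) = atan (elev_tan L du t).
Proof.
pose proof (d_b_pos L du t ltac:(lra)) as Hd. pose proof (elev_tan_den_pos t) as Hn.
assert (Hdd : d_b L du t * d_b L du t = (L - du * cos t) ^ 2 + (du * sin t) ^ 2).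
{ unfold d_b. rewrite sqrt_sqrt, d_b_sqr_polar; [reflexivity |].
  apply Rlt_le, d_b_radicand_pos. lra. }
assert (Hcos : 1 - (sin_elev_b L du t)² = ((L - du * cos t) / d_b L du t) ^ 2).
{ unfold sin_elev_b, Rsqr. field_simplify_eq; [| lra]. nra. }
assert (Hlt : 0 < ((L - du * cos t) / d_b L du t) ^ 2).
{ apply pow_lt, Rdiv_lt_0_compat; lra. }
assert (Habs : Rabs (sin_elev_b L du t) < 1).
{ rewrite <- Rabs_R1. apply Rsqr_lt_abs_0. rewrite Rsqr_1. lra. }
rewrite asin_atan by (apply Rabs_def2 in Habs; lra).
unfold elev_tan. f_equal.
rewrite Hcos, sqrt_pow2 by (apply Rlt_le, Rdiv_lt_0_compat; lra).
unfold sin_elev_b. field. lra.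
Qed.

Lemma f_gain_exp_log_gain t : f_gain xiL a b L du t = exp (log_gain xiL a b L du t).
Proof.
pose proof (d_b_radicand_pos L du t ltac:(lra)) as Hr. pose proof (nlos_odds_pos t).
rewrite f_gain_elev, asin_sin_elev_b. unfold log_gain, rpow, Rpower, p_w, d_b.
fold (nlos_odds a b L du t).
rewrite ln_sqrt by lra.
unfold Rminus at 2. rewrite exp_plus, exp_Ropp, exp_ln by lra.
unfold Rdiv. rewrite Rmult_1_l. f_equal. f_equal. field.
Qed.

Lemma log_gain_deriv t :
  is_derive (log_gain xiL a b L du) t
    (du / (L ^ 2 + du ^ 2 - 2 * du * L * cos t) * log_gain_slope xiL a b L du t).
Proof.
pose proof (d_b_radicand_pos L du t ltac:(lra)) as Hr.
pose proof (elev_tan_den_pos t) as Hn. pose proof (nlos_odds_pos t) as Ho.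
unfold log_gain, log_gain_slope, nlos_odds, elev_tan in *.
auto_derive.
{ repeat split; try lra.
  all: set (E := exp _) in *; assert (0 < E) by apply exp_pos; nra. }
set (E := exp (- b * (180 / PI * atan (du * sin t / (L - du * cos t)) - a))) in *.
change (exp (- b * (180 / PI * atan (du * sin t * / (L + - (du * cos t))) + - a))) with E.
assert (HPI : PI <> 0) by apply PI_neq0.
assert (Hs2 : sin t ^ 2 = 1 - cos t ^ 2) by (rewrite <- (sin2_cos2 t); unfold Rsqr; ring).
assert (Hs3 : sin t ^ 3 = sin t * (1 - cos t ^ 2)) by (rewrite <- Hs2; ring).
assert (Hs4 : sin t ^ 4 = (1 - cos t ^ 2) ^ 2) by (rewrite <- Hs2; ring).
field_simplify_eq.
- rewrite ?Hs4, ?Hs3, ?Hs2. ring.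
- repeat split; try lra. apply Rgt_not_eq.
  pose proof (Rle_0_sqr (du * sin t)). unfold Rsqr in *. nra.
Qed.

Lemma elev_tan_deriv t :
  is_derive (elev_tan L du) t (du * (L * cos t - du) / (L - du * cos t) ^ 2).
Proof.
pose proof (elev_tan_den_pos t) as Hn. unfold elev_tan.
auto_derive; [lra |].
assert (Hs2 : sin t ^ 2 = 1 - cos t ^ 2) by (rewrite <- (sin2_cos2 t); unfold Rsqr; ring).
field_simplify_eq; [| lra]. rewrite Hs2. ring.
Qed.

Lemma elev_tan_le t1 t2 : 0 <= t1 <= t2 -> t2 <= PI / 2 -> du <= L * cos t2 ->
  elev_tan L du t1 <= elev_tan L du t2.
Proof.
intros Ht1 Ht2 Hc. pose proof PI_RGT_0.
apply (is_derive_nondecreasing _ (fun x => du * (L * cos x - du) / (L - du * cos x) ^ 2));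
  [lra | intros; apply elev_tan_deriv |].
intros x Hx. pose proof (elev_tan_den_pos x).
assert (L * cos t2 <= L * cos x) by (apply Rmult_le_compat_l, cos_decr_1; lra).
apply Rdiv_le_0_compat; [apply Rmult_le_pos; lra | apply pow_lt; lra].
Qed.

Lemma nlos_odds_le t1 t2 : 0 <= t1 <= t2 -> t2 <= PI / 2 -> du <= L * cos t2 ->
  nlos_odds a b L du t2 <= nlos_odds a b L du t1.
Proof.
intros Ht1 Ht2 Hc. assert (0 < 180 / PI) by (apply Rdiv_lt_0_compat; [lra | apply PI_RGT_0]).
apply Rmult_le_compat_l; [lra |].
apply exp_le, Rmult_le_compat_neg_l; [lra |].
apply Rplus_le_compat_r, Rmult_le_compat_l; [lra |].
now apply atan_le, elev_tan_le.
Qed.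

Lemma odds_ratio_le x y : 0 <= x <= y -> x / (1 + x) <= y / (1 + y).
Proof.
intros Hxy.
assert (y / (1 + y) - x / (1 + x) = (y - x) / ((1 + x) * (1 + y))) by (field; lra).
assert (0 <= (y - x) / ((1 + x) * (1 + y))) by (apply Rdiv_le_0_compat; nra).
lra.
Qed.

Lemma log_gain_slope_le t1 t2 : 0 <= t1 <= t2 -> t2 <= PI / 2 -> du <= L * cos t2 ->
  log_gain_slope xiL a b L du t2 <= log_gain_slope xiL a b L du t1.
Proof.
intros Ht1 Ht2 Hc. pose proof PI_RGT_0. unfold log_gain_slope.
assert (Hsin : sin t1 <= sin t2) by (apply sin_incr_1; lra).
assert (Hcos : cos t2 <= cos t1) by (apply cos_decr_1; lra).
pose proof (nlos_odds_pos t2).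
assert (Hq : nlos_odds a b L du t2 / (1 + nlos_odds a b L du t2)
             <= nlos_odds a b L du t1 / (1 + nlos_odds a b L du t1)).
{ apply odds_ratio_le. split; [lra |]. now apply nlos_odds_le. }
assert (Hq0 : 0 <= nlos_odds a b L du t2 / (1 + nlos_odds a b L du t2))
  by (apply Rdiv_le_0_compat; lra).
assert (0 < b * (180 / PI)) by (apply Rmult_lt_0_compat; [lra | apply Rdiv_lt_0_compat; lra]).
assert (xiL * L * sin t2 <= xiL * L * sin t1) by (apply Rmult_le_compat_neg_l; nra).
assert (nlos_odds a b L du t2 / (1 + nlos_odds a b L du t2) * (L * cos t2 - du)
        <= nlos_odds a b L du t1 / (1 + nlos_odds a b L du t1) * (L * cos t1 - du))
  by (apply Rmult_le_compat; nra).
rewrite !Rmult_assoc with (r1 := b * (180 / PI)).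
apply Rplus_le_compat; [lra |]. apply Rmult_le_compat_l; lra.
Qed.

Lemma log_gain_slope_neg t : 0 < t <= PI / 2 -> L * cos t < du ->
  log_gain_slope xiL a b L du t < 0.
Proof.
intros Ht Hc. pose proof PI_RGT_0. unfold log_gain_slope.
assert (0 < sin t) by (apply sin_gt_0; lra).
pose proof (nlos_odds_pos t).
assert (0 <= b * (180 / PI) * (nlos_odds a b L du t / (1 + nlos_odds a b L du t))).
{ apply Rmult_le_pos; [apply Rmult_le_pos; [lra | apply Rdiv_le_0_compat; lra] |].
  apply Rdiv_le_0_compat; lra. }
assert (xiL * L * sin t < 0) by (apply Rmult_neg_pos; [apply Rmult_neg_pos |]; lra).
nra.
Qed.

Lemma log_gain_slope_crossing x y : 0 <= x <= y -> y <= PI / 2 ->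
  0 <= log_gain_slope xiL a b L du y -> 0 <= log_gain_slope xiL a b L du x.
Proof.
intros Hx Hy Hsy. destruct (Rle_lt_dec du (L * cos y)) as [Hc | Hc].
- eapply Rle_trans; [exact Hsy |]. now apply log_gain_slope_le.
- assert (y <> 0) by (intros ->; rewrite cos_0 in Hc; lra).
  assert (log_gain_slope xiL a b L du y < 0) by (apply log_gain_slope_neg; lra). lra.
Qed.

Lemma f_gain_circle_quasiconcave : quasiconcave_on (f_gain xiL a b L du) 0 (PI / 2).
Proof.
assert (Hq : quasiconcave_on (log_gain xiL a b L du) 0 (PI / 2)).
{ apply (is_derive_quasiconcave _
    (fun t => du / (L ^ 2 + du ^ 2 - 2 * du * L * cos t) * log_gain_slope xiL a b L du t)).
  - intros x _. apply log_gain_deriv.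
  - intros x y Hx Hy Hdy.
    assert (Hw : forall t, 0 < du / (L ^ 2 + du ^ 2 - 2 * du * L * cos t))
      by (intros t; apply Rdiv_lt_0_compat, d_b_radicand_pos; lra).
    apply Rmult_le_pos; [apply Rlt_le, Hw |].
    apply (log_gain_slope_crossing x y Hx Hy).
    apply (Rmult_le_reg_l _ _ _ (Hw y)). lra. }
intros t1 t2 t3 H12 H23. rewrite !f_gain_exp_log_gain.
destruct (Hq t1 t2 t3 H12 H23); [left | right]; now apply exp_le.
Qed.

End LogGain.

(** * The covertness constraint *)

Definition gain_w (xiL xiN a b dw t : R) : R := rpow dw xiL * p_w a b t + rpow dw xiN.

Lemma Pbar_gain_w xiL xiN a b P dw t :
  Pbar xiL xiN a b P dw t = P * gain_w xiL xiN a b dw t.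
Proof. unfold Pbar, gain_w. ring. Qed.

Lemma gain_w_pos xiL xiN a b dw t : 0 < a -> 0 < gain_w xiL xiN a b dw t.
Proof.
intros Ha. pose proof (rpow_pos dw xiL). pose proof (rpow_pos dw xiN).
pose proof (p_w_pos a b t Ha). unfold gain_w. nra.
Qed.

Lemma gain_w_le xiL xiN a b dw1 t1 dw2 t2 : xiL < 0 -> xiN < 0 -> 0 < a -> 0 < b ->
  0 < dw2 <= dw1 -> t1 <= t2 -> gain_w xiL xiN a b dw1 t1 <= gain_w xiL xiN a b dw2 t2.
Proof.
intros HxiL HxiN Ha Hb Hdw Ht. unfold gain_w.
apply Rplus_le_compat; [| now apply rpow_le_neg].
apply Rmult_le_compat.
- apply Rlt_le, rpow_pos.
- now apply Rlt_le, p_w_pos.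
- now apply rpow_le_neg.
- now apply p_w_le.
Qed.

Definition leakage (s p : R) : R := ln ((p + s) / s) - p / (p + s).

Lemma D01_leakage xiL xiN a b sw2 n P dw t :
  D01 xiL xiN a b sw2 n P dw t = INR n / 2 * leakage sw2 (Pbar xiL xiN a b P dw t).
Proof. reflexivity. Qed.

Lemma leakage_increment s p q : 0 < s -> 0 <= p <= q ->
  p * (q - p) / ((q + s) * (p + s)) <= leakage s q - leakage s p.
Proof.
intros Hs Hpq. unfold leakage.
assert (Hsplit : ln ((q + s) / s) = ln ((q + s) / (p + s)) + ln ((p + s) / s)).
{ rewrite <- ln_mult by (apply Rdiv_lt_0_compat; lra). f_equal. field. lra. }
(* [ln x >= 1 - 1/x] at [x = (q + s) / (p + s)] *)
assert (Hln : 1 - (p + s) / (q + s) <= ln ((q + s) / (p + s))).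
{ pose proof (exp_ineq1_le (ln ((p + s) / (q + s)))) as Hexp.
  rewrite exp_ln in Hexp by (apply Rdiv_lt_0_compat; lra).
  replace (ln ((q + s) / (p + s))) with (- ln ((p + s) / (q + s))); [lra |].
  rewrite <- ln_Rinv by (apply Rdiv_lt_0_compat; lra). f_equal. field. lra. }
replace (p * (q - p) / ((q + s) * (p + s)))
  with (1 - (p + s) / (q + s) - q / (q + s) + p / (p + s)) by (field; lra).
lra.
Qed.

Lemma leakage_le s p q : 0 < s -> 0 <= p <= q -> leakage s p <= leakage s q.
Proof.
intros Hs Hpq. pose proof (leakage_increment s p q Hs Hpq).
assert (0 <= p * (q - p) / ((q + s) * (p + s))) by (apply Rdiv_le_0_compat; nra).
lra.
Qed.

Lemma leakage_lt s p q : 0 < s -> 0 < p < q -> leakage s p < leakage s q.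
Proof.
intros Hs Hpq. pose proof (leakage_increment s p q Hs ltac:(lra)).
assert (0 < p * (q - p) / ((q + s) * (p + s))) by (apply Rdiv_lt_0_compat; nra).
lra.
Qed.

Section Covertness.

Variables (xiL xiN a b sw2 : R) (n : nat).
Hypothesis (Hsw2 : 0 < sw2).

Lemma D01_le_of_Pbar_le P1 dw1 t1 P2 dw2 t2 :
  0 <= Pbar xiL xiN a b P1 dw1 t1 <= Pbar xiL xiN a b P2 dw2 t2 ->
  D01 xiL xiN a b sw2 n P1 dw1 t1 <= D01 xiL xiN a b sw2 n P2 dw2 t2.
Proof.
intros HP. rewrite !D01_leakage. pose proof (pos_INR n).
apply Rmult_le_compat_l; [lra |]. now apply leakage_le.
Qed.

Lemma Pbar_le_of_D01_le P1 dw1 t1 P2 dw2 t2 : 0 < INR n -> 0 < Pbar xiL xiN a b P2 dw2 t2 ->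
  D01 xiL xiN a b sw2 n P1 dw1 t1 <= D01 xiL xiN a b sw2 n P2 dw2 t2 ->
  Pbar xiL xiN a b P1 dw1 t1 <= Pbar xiL xiN a b P2 dw2 t2.
Proof.
intros Hn HP2 HD. apply Rnot_lt_le. intros Hlt. revert HD. apply Rlt_not_le.
rewrite !D01_leakage. apply Rmult_lt_compat_l; [lra |]. now apply leakage_lt.
Qed.

Lemma covert_power_cap eps P dw t P0 dw0 t0 : 0 < a -> 0 < eps -> 0 < P0 ->
  D01 xiL xiN a b sw2 n P0 dw0 t0 = 2 * eps ^ 2 ->
  D01 xiL xiN a b sw2 n P dw t <= 2 * eps ^ 2 ->
  P * gain_w xiL xiN a b dw t <= P0 * gain_w xiL xiN a b dw0 t0.
Proof.
intros Ha Heps HP0 HD0 HD. rewrite <- !Pbar_gain_w.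
assert (Hn : 0 < INR n).
{ destruct n; [| apply lt_0_INR; lia].
  rewrite D01_leakage in HD0. simpl in HD0. pose proof (pow_lt eps 2 Heps). lra. }
apply Pbar_le_of_D01_le; [exact Hn | | lra].
rewrite Pbar_gain_w. apply Rmult_lt_0_compat; [exact HP0 | now apply gain_w_pos].
Qed.

End Covertness.

(** * The optimal deployment *)

Lemma gamma_b_le xiL a b sb2 L P1 dw1 t1 P2 dw2 t2 : 0 < a -> 0 < sb2 ->
  0 <= P1 <= P2 -> f_gain xiL a b L dw1 t1 <= f_gain xiL a b L dw2 t2 ->
  gamma_b xiL a b sb2 L P1 dw1 t1 <= gamma_b xiL a b sb2 L P2 dw2 t2.
Proof.
intros Ha Hsb2 HP Hf. pose proof (f_gain_pos xiL a b L dw1 t1 Ha).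
unfold gamma_b, Rdiv. apply Rmult_le_compat_r; [now apply Rlt_le, Rinv_0_lt_compat |].
apply Rmult_le_compat; lra.
Qed.

Section Optimality.

Variables (xiL xiN a b sb2 sw2 L : R) (n : nat) (eps Pm dl du thl thO : R).
Hypotheses (HxiL : xiL < 0) (HxiN : xiN < 0) (Ha : 0 < a) (Hb : 0 < b)
  (Hsb2 : 0 < sb2) (Hsw2 : 0 < sw2) (Heps : 0 < eps) (HPm : 0 < Pm)
  (Hthl : 0 < thl < PI / 2) (Hdl : 0 < dl) (Hdlu : dl <= du) (HduL : du < L)
  (Hdu_thl : du <= L * cos thl) (HthO : 0 <= thO <= PI / 2)
  (HthO_peak : forall t, 0 <= t <= PI / 2 ->
     f_gain xiL a b L du t <= f_gain xiL a b L du thO).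

Local Notation F := (f_gain xiL a b L du).
Local Notation hw := (gain_w xiL xiN a b).
Local Notation D := (D01 xiL xiN a b sw2 n).
Local Notation gamma := (gamma_b xiL a b sb2 L).
Local Notation feas := (feasible xiL xiN a b sw2 n eps Pm dl du thl).
Local Notation opt := (optimal xiL xiN a b sb2 sw2 L n eps Pm dl du thl).

Lemma circle_gain_quasiconcave : quasiconcave_on F 0 (PI / 2).
Proof. apply f_gain_circle_quasiconcave; lra. Qed.

Lemma feasible_dominated P dw t : feas P dw t ->
  exists te, thl <= te <= t /\ f_gain xiL a b L dw t <= F te.
Proof.
intros (_ & _ & Hdw & Ht). pose proof PI_RGT_0.
assert (Hthl_max : thl <= acos (du / L)).
{ apply le_acos_iff; [lra | |].
  - assert (0 < du / L) by (apply Rdiv_lt_0_compat; lra).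
    assert (du / L < 1) by (apply (Rdiv_lt_1 du L); lra). lra.
  - apply Rle_div_l; lra. }
exists (Rmin t (acos (du / L))). split.
- split; [apply Rmin_glb; lra | apply Rmin_l].
- apply f_gain_le_circle; lra.
Qed.

Lemma optimal_on_circle P th : feas P du th ->
  (forall P' dw' t', feas P' dw' t' -> P' <= P) ->
  (forall t, thl <= t <= PI / 2 -> F t <= F th) ->
  opt P du th.
Proof.
intros Hfeas Hpow Hgain. split; [exact Hfeas |].
intros P' dw' t' Hf'. pose proof (Hpow _ _ _ Hf') as HP'.
destruct (feasible_dominated _ _ _ Hf') as (te & Hte & Hle).
destruct Hf' as (_ & HP'pos & _ & Ht').
apply gamma_b_le; [assumption | assumption | lra |].
eapply Rle_trans; [exact Hle | apply Hgain; lra].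
Qed.

Lemma circle_gain_le_past_peak t : thO <= thl -> thl <= t <= PI / 2 -> F t <= F thl.
Proof.
intros. apply (quasiconcave_peak_right F 0 (PI / 2) thO circle_gain_quasiconcave);
  lra || assumption.
Qed.

Lemma optimal_case_A : thO < thl -> D Pm du thl <= 2 * eps ^ 2 -> opt Pm du thl.
Proof.
intros HO HD. apply optimal_on_circle.
- repeat split; lra.
- intros P' dw' t' Hf'. apply Hf'.
- intros t Ht. apply circle_gain_le_past_peak; lra.
Qed.

Lemma optimal_case_B Peps : 0 < Peps -> D Peps du thl = 2 * eps ^ 2 ->
  thO < thl -> D Pm du thl > 2 * eps ^ 2 -> opt Peps du thl.
Proof.
intros HPe HDe HO HD. pose proof (gain_w_pos xiL xiN a b du thl Ha) as Hh.
assert (HPeps : Peps <= Pm).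
{ apply Rnot_lt_le. intros Hlt. apply (Rlt_not_le _ _ HD). rewrite <- HDe.
  apply D01_le_of_Pbar_le; [exact Hsw2 |]. rewrite !Pbar_gain_w. nra. }
apply optimal_on_circle.
- repeat split; lra.
- intros P' dw' t' Hf'.
  pose proof (covert_power_cap xiL xiN a b sw2 n Hsw2 eps P' dw' t' Peps du thl
    Ha Heps HPe HDe (proj1 Hf')) as Hcap.
  destruct Hf' as (_ & HP' & Hdw' & Ht').
  assert (hw du thl <= hw dw' t') by (apply gain_w_le; lra).
  apply (Rmult_le_reg_r (hw du thl)); nra.
- intros t Ht. apply circle_gain_le_past_peak; lra.
Qed.

Lemma optimal_case_C : thl <= thO -> D Pm du thO <= 2 * eps ^ 2 -> opt Pm du thO.
Proof.
intros HlO HD. apply optimal_on_circle.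
- repeat split; lra.
- intros P' dw' t' Hf'. apply Hf'.
- intros t Ht. apply HthO_peak. lra.
Qed.

Definition reduced_feasible (thEps P th : R) : Prop :=
  D P du th = 2 * eps ^ 2 /\ P <= Pm /\ Rmax thl thEps <= th <= thO.

Definition budget_power (thEps s : R) : R := Pm * hw du thEps / hw du s.

Lemma budget_angle_le_peak thEps : D Pm du thEps = 2 * eps ^ 2 ->
  D Pm du thO > 2 * eps ^ 2 -> thEps <= thO.
Proof.
intros HDe HD. apply Rnot_lt_le. intros Hlt. apply (Rlt_not_le _ _ HD). rewrite <- HDe.
apply D01_le_of_Pbar_le; [exact Hsw2 |]. rewrite !Pbar_gain_w.
assert (hw du thO <= hw du thEps) by (apply gain_w_le; lra).
pose proof (gain_w_pos xiL xiN a b du thO Ha). nra.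
Qed.

Lemma budget_power_reduced_feasible thEps s : D Pm du thEps = 2 * eps ^ 2 ->
  Rmax thl thEps <= s <= thO -> reduced_feasible thEps (budget_power thEps s) s.
Proof.
intros HDe Hs. pose proof (gain_w_pos xiL xiN a b du s Ha).
pose proof (Rmax_r thl thEps). unfold budget_power.
split; [| split; [| exact Hs]].
- rewrite <- HDe, !D01_leakage, !Pbar_gain_w. do 2 f_equal. field. lra.
- apply Rle_div_l; [lra |]. apply Rmult_le_compat_l; [lra |]. apply gain_w_le; lra.
Qed.

Lemma feasible_power_le_budget thEps P dw t s : D Pm du thEps = 2 * eps ^ 2 ->
  feas P dw t -> s <= Rmax t thEps -> P <= budget_power thEps s.
Proof.
intros HDe Hf Hs.
pose proof (covert_power_cap xiL xiN a b sw2 n Hsw2 eps P dw t Pm du thEps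
  Ha Heps HPm HDe (proj1 Hf)) as Hcap.
destruct Hf as (_ & HP & Hdw & Ht). pose proof (gain_w_pos xiL xiN a b du s Ha).
apply Rle_div_r; [lra |].
apply Rmax_Rle in Hs as [Hs | Hs].
- assert (hw du s <= hw dw t) by (apply gain_w_le; lra). nra.
- assert (hw du s <= hw du thEps) by (apply gain_w_le; lra). nra.
Qed.

Lemma optimal_case_D thEps Pj thj :
  D Pm du thEps = 2 * eps ^ 2 ->
  reduced_feasible thEps Pj thj ->
  (forall P th, reduced_feasible thEps P th -> gamma P du th <= gamma Pj du thj) ->
  thl <= thO -> D Pm du thO > 2 * eps ^ 2 ->
  opt Pj du thj.
Proof.
intros HDe Hj Hmax HlO HD. pose proof PI_RGT_0.
pose proof (budget_angle_le_peak thEps HDe HD) as HeO.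
set (T := Rmax thl thEps).
assert (HT : thl <= T <= thO) by (split; [apply Rmax_l | apply Rmax_lub; lra]).
assert (HPj : 0 < Pj).
{ assert (HO : Rmax thl thEps <= thO <= thO) by (split; [apply HT | apply Rle_refl]).
  pose proof (Hmax _ _ (budget_power_reduced_feasible thEps thO HDe HO)) as Hg.
  pose proof (f_gain_pos xiL a b L du thj Ha). pose proof (f_gain_pos xiL a b L du thO Ha).
  assert (0 < budget_power thEps thO).
  { apply Rdiv_lt_0_compat; [apply Rmult_lt_0_compat; [lra |] |]; now apply gain_w_pos. }
  unfold gamma_b in Hg. apply Rmult_le_reg_r in Hg; [nra | now apply Rinv_0_lt_compat]. }
destruct Hj as (HDj & HPjm & HTj). fold T in HTj. split.
- repeat split; lra.
- intros P' dw' t' Hf'.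
  destruct (feasible_dominated _ _ _ Hf') as (te & Hte & Hle).
  pose proof Hf' as (_ & HP' & _ & Ht').
  (* projecting [te] onto [T, thO] raises the gain and does not lower the power cap *)
  set (s := Rmax T (Rmin te thO)).
  assert (Hs : T <= s <= thO).
  { split; [apply Rmax_l | apply Rmax_lub; [lra | apply Rmin_r]]. }
  assert (Hst : s <= Rmax t' thEps).
  { pose proof (Rmin_l te thO). pose proof (Rmax_l t' thEps). pose proof (Rmax_r t' thEps).
    apply Rmax_lub; [apply Rmax_lub |]; lra. }
  apply Rle_trans with (gamma (budget_power thEps s) du s).
  + apply gamma_b_le; [exact Ha | exact Hsb2 | split |].
    * lra.
    * exact (feasible_power_le_budget thEps P' dw' t' s HDe Hf' Hst).
    * eapply Rle_trans; [exact Hle |].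
      apply (quasiconcave_peak_clamp F 0 (PI / 2) thO circle_gain_quasiconcave);
        lra || assumption.
  + now apply Hmax, budget_power_reduced_feasible.
Qed.

End Optimality.

Theorem proposition1
  (xiL xiN a b sb2 sw2 : R) (n : nat) (eps Pm L dl du thl thO : R)
  (HxiL : xiL < 0) (HxiN : xiN < 0) (Ha : 0 < a) (Hb : 0 < b)
  (Hsb2 : 0 < sb2) (Hsw2 : 0 < sw2) (Heps : 0 < eps) (HPm : 0 < Pm) (HL : 0 < L)
  (Hthl : 0 < thl < PI / 2)
  (Hd : 0 < dl /\ dl < du /\ du <= L * cos thl /\ L * cos thl < L / cos thl)
  (* thO = theta_w^o(du): the unique unconstrained maximizer over [0, pi/2],
     independent of P > 0 *)
  (HthO_dom : 0 <= thO <= PI / 2)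
  (HthO_max : forall P, 0 < P -> forall th, 0 <= th <= PI / 2 ->
      gamma_b xiL a b sb2 L P du th <= gamma_b xiL a b sb2 L P du thO)
  (HthO_uniq : forall P, 0 < P -> forall th, 0 <= th <= PI / 2 ->
      (forall th', 0 <= th' <= PI / 2 ->
         gamma_b xiL a b sb2 L P du th' <= gamma_b xiL a b sb2 L P du th) ->
      th = thO) :
  (* (A) *)
  (thO < thl ->
   D01 xiL xiN a b sw2 n Pm du thl <= 2 * eps ^ 2 ->
   optimal xiL xiN a b sb2 sw2 L n eps Pm dl du thl Pm du thl) /\
  (* (B) *)
  (forall Peps : R,
   0 < Peps -> D01 xiL xiN a b sw2 n Peps du thl = 2 * eps ^ 2 ->
   (forall P, 0 < P -> D01 xiL xiN a b sw2 n P du thl = 2 * eps ^ 2 -> P = Peps) ->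
   thO < thl ->
   D01 xiL xiN a b sw2 n Pm du thl > 2 * eps ^ 2 ->
   optimal xiL xiN a b sb2 sw2 L n eps Pm dl du thl Peps du thl) /\
  (* (C) *)
  (thl <= thO <= acos (du / L) ->
   D01 xiL xiN a b sw2 n Pm du thO <= 2 * eps ^ 2 ->
   optimal xiL xiN a b sb2 sw2 L n eps Pm dl du thl Pm du thO) /\
  (* (D) *)
  (forall thEps Pj thj : R,
   D01 xiL xiN a b sw2 n Pm du thEps = 2 * eps ^ 2 ->
   (forall th, D01 xiL xiN a b sw2 n Pm du th = 2 * eps ^ 2 -> th = thEps) ->
   (* (Pj, thj) is the unique maximizer of the reduced problem *)
   let feas2 := fun P th =>
     D01 xiL xiN a b sw2 n P du th = 2 * eps ^ 2 /\ P <= Pm /\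
     Rmax thl thEps <= th <= thO in
   feas2 Pj thj ->
   (forall P th, feas2 P th ->
      gamma_b xiL a b sb2 L P du th <= gamma_b xiL a b sb2 L Pj du thj) ->
   (forall P th, feas2 P th ->
      (forall P' th', feas2 P' th' ->
         gamma_b xiL a b sb2 L P' du th' <= gamma_b xiL a b sb2 L P du th) ->
      P = Pj /\ th = thj) ->
   thl <= thO <= acos (du / L) ->
   D01 xiL xiN a b sw2 n Pm du thO > 2 * eps ^ 2 ->
   optimal xiL xiN a b sb2 sw2 L n eps Pm dl du thl Pj du thj).
Proof.
destruct Hd as (Hdl & Hdlu & Hdu_thl & _).
assert (HduL : du < L).
{ assert (cos thl < 1) by (rewrite <- cos_0; apply cos_decreasing_1; lra). nra. }
assert (Hpeak : forall t, 0 <= t <= PI / 2 ->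
          f_gain xiL a b L du t <= f_gain xiL a b L du thO).
{ intros t Ht. pose proof (HthO_max 1 Rlt_0_1 t Ht) as Hg. unfold gamma_b in Hg.
  apply Rmult_le_reg_r with (/ sb2); [now apply Rinv_0_lt_compat | lra]. }
split; [| split; [| split]].
- intros. apply optimal_case_A with (thO := thO); auto; lra.
- intros Peps HPe HDe _ HO HD.
  apply optimal_case_B with (thO := thO); auto; lra.
- intros [HlO _] HD. apply optimal_case_C; auto; lra.
- intros thEps Pj thj HDe _ feas2 Hj Hmax _ [HlO _] HD.
  apply optimal_case_D with (thO := thO) (thEps := thEps); auto; lra.
Qed.
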